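(* Let $P$ be a finite poset. There exist a constant $C(P)$ depending only on $P$ and, for each positive integer $n$, a constant $\alpha_n$ depending only on $n$, such that for all integers $n\ge\dim P$ and $k\ge 2$: if $S\subseteq[k]^n$ does not contain a copy of $P$, then $$L_{[k]^n}(S)\le C(P)\,\alpha_n\log k.$$
   Context: $[k]^n$ is the set of $n$-tuples with entries in $[k]=\{1,\dots,k\}$, ordered pointwise. Its levels are $A_i=\{(a_1,\dots,a_n)\in[k]^n: a_1+\dots+a_n=n+i\}$ for $i=0,\dots,kn-n$. For $S\subseteq[k]^n$, the Lubell mass is $L_{[k]^n}(S)=\sum_{i=0}^{kn-n}\frac{|S\cap A_i|}{|A_i|}$. A subset $P'$ of a poset $Q$ is a copy of $P$ if the subposet of $Q$ induced on $P'$ is isomorphic to $P$. The (Dushnik–Miller) dimension $\dim P$ is the smallest positive integer $d$ for which there exist bijections $L_1,\dots,L_d:P\to[|P|]$ such that $p\le_P q$ iff $L_i(p)\le L_i(q)$ for every $i\in[d]$. *)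

From mathcomp Require Import all_boot.
From Stdlib Require Import Reals.

Set Implicit Arguments.
Unset Strict Implicit.
Unset Printing Implicit Defensive.

Definition is_partial_order (T : finType) (le : rel T) : Prop :=
  reflexive le /\ antisymmetric le /\ transitive le.

(* Points of [k]^n.  Entries are encoded in 'I_k = {0,..,k-1}, i.e. the
   entry a in [k] = {1,..,k} is stored as a-1. *)
Definition grid (n k : nat) := {ffun 'I_n -> 'I_k}.

Definition grid_le (n k : nat) (x y : grid n k) : bool :=
  [forall j : 'I_n, (x j <= y j)%N].

(* level index: x lies in A_i  iff  sum_j (x_j + 1) = n + i,
   i.e. sum_j x_j = i (with 0-based entries) *)
Definition level (n k : nat) (x : grid n k) : nat := (\sum_(j < n) (x j : nat))%N.

Definition level_set (n k : nat) (i : nat) : {set grid n k} :=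
  [set x : grid n k | level x == i].

Definition lubell (n k : nat) (S : {set grid n k}) : R :=
  sum_f_R0 (fun i => (INR #|S :&: level_set n k i| / INR #|level_set n k i|)%R)
           (k * n - n)%N.

(* S contains a copy of the poset (T, le): some subset of S whose induced
   subposet is isomorphic to (T, le), i.e. an injective order embedding. *)
Definition contains_copy (T : finType) (le : rel T) (n k : nat)
  (S : {set grid n k}) : Prop :=
  exists f : T -> grid n k,
    injective f /\ (forall p, f p \in S) /\
    (forall p q, le p q = grid_le (f p) (f q)).

Definition has_realizer (T : finType) (le : rel T) (d : nat) : Prop :=
  exists L : 'I_d -> T -> 'I_#|T|,
    (forall i, bijective (L i)) /\
    (forall p q, le p q <-> (forall i, (L i p <= L i q)%N)).

Definition is_dim (T : finType) (le : rel T) (d : nat) : Prop :=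
  (0 < d)%N /\ has_realizer le d /\
  (forall d', (0 < d')%N -> has_realizer le d' -> (d <= d')%N).

(* A realizer of P by d <= n linear orders turns P into an n-dimensional
   permutation pattern (one ranking of P per coordinate), and every copy of
   that pattern in [k]^n is a copy of P.  By the Klazar-Marcus theorem, proved
   by induction on the dimension through Marcus-Tardos block contraction, a
   pattern-free set whose coordinate differences are all below N has
   O(N^(n-1)) points.
   The width of a level is its distance to the nearer extreme level, capped at
   k.  Points of S on levels of width < 2^(t+1) lie that close to one of the two
   corners of [k]^n, so there are O(2^(t(n-1))) of them, whereas a level of
   width >= 2^t has at least (2^t/n)^(n-1) points.  Summing over the
   log2 k + 1 dyadic width classes gives L(S) = O(log k); the constant is split
   into a factor depending on |P| and one depending on n. *)

From mathcomp Require Import all_boot.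
From Stdlib Require Import Reals Lra Psatz.
(* Reals shadows the notations of ssrnat, which is therefore imported again. *)
From mathcomp Require Import ssrnat zify.

Set Implicit Arguments.
Unset Strict Implicit.
Unset Printing Implicit Defensive.

Lemma leq_exp_base a b e : a <= b -> a ^ e <= b ^ e.
Proof. by move=> le_ab; elim: e => [|e IH]; rewrite ?expn0 ?expnS ?leq_mul. Qed.

Lemma ltn_homo_mono (T : finType) (a b : T -> nat) : injective a ->
  (forall p q, a p < a q -> b p < b q) -> forall p q, (a p < a q) = (b p < b q).
Proof.
move=> a_inj homo_ab p q; apply/idP/idP; first exact: homo_ab.
case: (ltngtP (a p) (a q)) => // [/homo_ab|/a_inj ->]; lia.
Qed.

Lemma sum_ord_ltn n r : \sum_(i < n) (i < r : nat) = minn r n.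
Proof.
elim: n => [|n IH]; first by rewrite big_ord0 minn0.
by rewrite big_ord_recr /= IH; case: (ltnP n r) => ?; lia.
Qed.

(* Separates the variables of a bound depending on two parameters. *)
Lemma leq_mul_sums (B : nat -> nat -> nat) m n :
  B m n <= (\sum_(i < m.+1) B m i).+1 * (\sum_(j < n.+1) B j n).+1.
Proof.
have le_sum (F : nat -> nat) j N : j <= N -> F j <= \sum_(i < N.+1) F i.
  by move=> le_jN; rewrite (bigD1 (Ordinal (le_jN : j < N.+1))) //= leq_addr.
have [le_mn|lt_nm] := leqP m n.
  apply: leq_trans (le_sum (B^~ n) _ _ le_mn) (leq_trans (leqnSn _) _).
  exact: leq_pmull.
apply: leq_trans (le_sum (B m) _ _ (ltnW lt_nm)) (leq_trans (leqnSn _) _).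
exact: leq_pmulr.
Qed.

Lemma INR_expn m t : INR (m ^ t) = (INR m ^ t)%R.
Proof. by elim: t => [|t IH]; rewrite ?expn0 // expnS mult_INR IH. Qed.

Lemma ln_le x y : (0 < x)%R -> (x <= y)%R -> (ln x <= ln y)%R.
Proof.
move=> x_gt0 /Rle_lt_or_eq_dec [lt_xy|<-]; last exact: Rle_refl.
exact/Rlt_le/ln_increasing.
Qed.

Lemma ln_INR_ge0 k : 0 < k -> (0 <= ln (INR k))%R.
Proof. by move=> k_gt0; rewrite -ln_1; apply: ln_le; [lra | apply/(le_INR 1)/leP]. Qed.

Lemma trunc_log2_le_ln k : 2 <= k -> (INR (trunc_log 2 k).+1 <= 4 * ln (INR k))%R.
Proof.
move=> le2k.
have INR2 : INR 2 = 2%R by rewrite /=; lra.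
have k_ge2 : (2 <= INR k)%R by rewrite -INR2; apply/le_INR/leP.
have pow_le : (2 ^ trunc_log 2 k <= INR k)%R.
  rewrite -INR2 -INR_expn; apply/le_INR/leP; apply: trunc_logP => //; lia.
have log_le : (INR (trunc_log 2 k) * ln 2 <= ln (INR k))%R.
  by rewrite -ln_pow; [apply: ln_le pow_le; apply: pow_lt|]; lra.
have ln2_le : (ln 2 <= ln (INR k))%R by apply: ln_le; lra.
have := ln_lt_2; have := pos_INR (trunc_log 2 k); rewrite S_INR; nra.
Qed.

Section GridSets.
Variables n k : nat.
Implicit Types (S : {set grid n k}) (V : {set 'I_k}).

Definition proj (i : 'I_n) S : {set 'I_k} := [set (x : grid n k) i | x in S].

Definition spread S N :=
  forall x y : grid n k, x \in S -> y \in S -> forall i, x i < y i + N.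

Lemma card_le_interval V a N : (forall v, v \in V -> a <= v < a + N) -> #|V| <= N.
Proof.
move=> inV; rewrite cardE -(size_map val) -(size_iota a N).
apply: uniq_leq_size; first by rewrite (map_inj_uniq val_inj) enum_uniq.
by move=> x /mapP [v]; rewrite mem_enum => /inV vP ->; rewrite mem_iota.
Qed.

Lemma card_le_spread1 V N :
  (forall v w, v \in V -> w \in V -> v < w + N) -> #|V| <= N.*2.
Proof.
move=> sprV; have [->|[v0 Vv0]] := set_0Vmem V; first by rewrite cards0.
apply: (@card_le_interval _ (v0.+1 - N)) => v Vv.
by have := sprV _ _ Vv Vv0; have := sprV _ _ Vv0 Vv; lia.
Qed.

Lemma card_le_prod_proj S : #|S| <= \prod_i #|proj i S|.
Proof.
rewrite -(cardsXn (fun i => proj i S)); apply: subset_leq_card.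
by apply/subsetP => x Sx; apply/setXnP => i; apply/imsetP; exists x.
Qed.

Lemma card_le_spread S N : spread S N -> #|S| <= N.*2 ^ n.
Proof.
move=> sprS; apply: leq_trans (card_le_prod_proj S) _.
apply: (@leq_trans (\prod_(i < n) N.*2)); last by rewrite prod_nat_const card_ord.
apply: leq_prod => i _.
apply: card_le_spread1 => _ _ /imsetP [x Sx ->] /imsetP [y Sy ->].
exact: sprS.
Qed.

End GridSets.

(* Send the [m]-th smallest element of [T] to the [m]-th smallest of [V]. *)
Lemma ltn_embedding_in M (T : finType) (r : T -> nat) (V : {set 'I_M}) :
  injective r -> #|T| <= #|V| ->
  exists e : T -> 'I_M, (forall p, e p \in V) /\ forall p q, (r p < r q) = (e p < e q).
Proof.
move=> r_inj leTV; set l := sort leq (map val (enum V)).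
have sorted_l : sorted ltn l.
  rewrite ltn_sorted_uniq_leq sort_uniq (map_inj_uniq val_inj) enum_uniq /=.
  exact/sort_sorted/leq_total.
have size_l : size l = #|V| by rewrite size_sort size_map cardE.
pose rank p := #|[set q | r q < r p]|.
have rank_lt p : rank p < #|T|.
  rewrite -cardsT; apply/proper_card/properP; split; first exact: subsetT.
  by exists p; rewrite ?inE // ltnn.
have rank_homo p q : r p < r q -> rank p < rank q.
  move=> lt_pq; apply/proper_card/properP; split.
    by apply/subsetP => u; rewrite !inE => /ltn_trans; apply.
  by exists p; rewrite !inE ?ltnn.
have pick_nth p : exists v : 'I_M, (v \in V) && (val v == nth 0 l (rank p)).
  have : nth 0 l (rank p) \in l by rewrite mem_nth // size_l (leq_trans (rank_lt p)).
  by rewrite mem_sort => /mapP [v]; rewrite mem_enum => Vv ->; exists v; rewrite Vv /=.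
have [e eP] := fin_all_exists pick_nth.
exists e; split=> [p|]; first by case/andP: (eP p).
apply: ltn_homo_mono => // p q /rank_homo lt_pq.
case/andP: (eP p) => _ /eqP ->; case/andP: (eP q) => _ /eqP ->.
apply: (sorted_ltn_nth ltn_trans) => //; rewrite inE size_l;
  exact: leq_trans (rank_lt _) leTV.
Qed.

(** * The Klazar-Marcus bound *)

(* [r i] ranks the points of the pattern along coordinate [i]. *)
Definition contains_pattern n M (T : finType) (r : 'I_n -> T -> nat)
    (S : {set grid n M}) :=
  exists f : T -> grid n M, (forall p, f p \in S) /\
    forall i p q, (r i p < r i q) = (f p i < f q i).

Definition km_bound d k c := forall M (T : finType) (r : 'I_d.+1 -> T -> nat)
  (S : {set grid d.+1 M}) N, #|T| = k -> (forall i, injective (r i)) ->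
  spread S N -> ~ contains_pattern r S -> #|S| <= c * N ^ d.

Lemma km_bound0 k : km_bound 0 k k.
Proof.
move=> M T r S N cardT r_inj _ noP; rewrite expn0 muln1 leqNgt; apply/negP => ltkS.
have card_proj0 : #|proj ord0 S| = #|S|.
  by apply: card_in_imset => x y _ _ exy; apply/ffunP => i; rewrite (ord1 i).
have [|e [eS e_mono]] := ltn_embedding_in (r_inj ord0) (_ : #|T| <= #|proj ord0 S|).
  by rewrite card_proj0 cardT ltnW.
apply: noP; exists (fun p => [ffun=> e p]); split=> [p|i p q]; last first.
  by rewrite !ffunE (ord1 i).
have /imsetP [x Sx ex] := eS p.
suff -> : [ffun=> e p] = x by [].
by apply/ffunP => i; rewrite ffunE (ord1 i) ex.
Qed.

Section Contraction.
Variables (s n M : nat).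
Implicit Types (S : {set grid n M}) (x y b : grid n M).

Definition contract x : grid n M :=
  [ffun i => Ordinal (leq_ltn_trans (leq_div (x i) s) (ltn_ord (x i)))].

Lemma contractE x i : contract x i = x i %/ s :> nat.
Proof. by rewrite ffunE. Qed.

Lemma ltn_contract x y i : contract x i < contract y i -> x i < y i.
Proof.
by rewrite !contractE => lt_div; rewrite ltnNge; apply/negP => /(leq_div2r s); lia.
Qed.

Lemma contains_pattern_contract (T : finType) (r : 'I_n -> T -> nat) S :
  (forall i, injective (r i)) -> contains_pattern r (contract @: S) ->
  contains_pattern r S.
Proof.
move=> r_inj [g [gS g_mono]].
have lift_pt p : exists x, (x \in S) && (contract x == g p).
  by have /imsetP [x Sx ->] := gS p; exists x; rewrite Sx eqxx.
have [f fP] := fin_all_exists lift_pt.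
exists f; split=> [p|i]; first by case/andP: (fP p).
apply: ltn_homo_mono => // p q lt_pq; apply: ltn_contract.
by case/andP: (fP p) => _ /eqP ->; case/andP: (fP q) => _ /eqP ->; rewrite -g_mono.
Qed.

Lemma spread_contract S N : spread S N -> spread (contract @: S) (N %/ s + 2).
Proof.
move=> sprS _ _ /imsetP [x Sx ->] /imsetP [y Sy ->] i; rewrite !contractE.
have lt_xy := sprS _ _ Sx Sy i.
have le_div : x i %/ s <= (y i + N) %/ s by apply/leq_div2r/ltnW.
have := leq_divDl s (y i) N; lia.
Qed.

Definition fiber S b := [set x in S | contract x == b].

Lemma card_fibers S : #|S| = \sum_(b in contract @: S) #|fiber S b|.
Proof.
rewrite -sum1_card (partition_big_imset contract); apply: eq_bigr => b _.
by rewrite -sum1_card; apply: eq_bigl => x; rewrite inE.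
Qed.

Lemma card_thin_fiber S b k :
  (forall j, #|proj j (fiber S b)| < k) -> #|fiber S b| <= k.-1 ^ n.
Proof.
move=> thin; apply: leq_trans (card_le_prod_proj _) _.
apply: (@leq_trans (\prod_(i < n) k.-1)); last by rewrite prod_nat_const card_ord.
by apply: leq_prod => i _; have := thin i; lia.
Qed.

Section Blocks.
Hypothesis s_gt0 : 0 < s.

Lemma proj_fiber_range S b j v : v \in proj j (fiber S b) ->
  b j * s <= v < b j * s + s.
Proof.
by case/imsetP => x; rewrite inE => /andP [_ /eqP <-] ->; rewrite contractE; lia.
Qed.

Lemma card_fiber S b : #|fiber S b| <= s ^ n.
Proof.
apply: leq_trans (card_le_prod_proj _) _.
apply: (@leq_trans (\prod_(i < n) s)); last by rewrite prod_nat_const card_ord.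
apply: leq_prod => i _.
by apply: (@card_le_interval _ _ (b i * s)); apply: proj_fiber_range.
Qed.

(* Within one fiber the [j]-th coordinates fill a single block of length [s],
   so they are determined by their residues mod [s]. *)
Definition offsets (j : 'I_n) S b : {set 'I_s} :=
  [set Ordinal (ltn_pmod v s_gt0) | v : 'I_M in proj j (fiber S b)].

Lemma card_offsets j S b : #|offsets j S b| = #|proj j (fiber S b)|.
Proof.
have in_block u : b j * s <= u < b j * s + s -> u = b j * s + u %% s.
  move=> u_in; have -> : u = b j * s + (u - b j * s) by lia.
  rewrite modnMDl modn_small; lia.
apply: card_in_imset => v w /proj_fiber_range v_in /proj_fiber_range w_in.
move/(congr1 val) => /= eq_mod; apply: val_inj => /=.
by rewrite (in_block _ v_in) (in_block _ w_in) eq_mod.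
Qed.

End Blocks.

End Contraction.

Arguments contract s {n M} x.

Section ThickFibers.
Variables (s d M : nat).
Hypothesis s_gt0 : 0 < s.
Variables (T : finType) (r : 'I_d.+2 -> T -> nat).
Hypothesis r_inj : forall i, injective (r i).
Implicit Types (S : {set grid d.+2 M}) (j : 'I_d.+2).
Local Notation contract := (contract s).

Definition drop_coord j (x : grid d.+2 M) : grid d.+1 M := [ffun i => x (lift j i)].

Definition thick_fibers S j :=
  [set b in contract @: S | #|T| <= #|proj j (fiber s S b)|].

Definition thick_class S j (hJ : 'I_M * {set 'I_s}) :=
  [set b in thick_fibers S j | (b j, offsets s_gt0 j S b) == hJ].

Lemma thick_classP S j h J b : b \in thick_class S j (h, J) ->
  [/\ b \in contract @: S, #|T| <= #|proj j (fiber s S b)|, b j = h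
    & offsets s_gt0 j S b = J].
Proof. by rewrite !inE => /andP [/andP [-> ->] /eqP [-> ->]]. Qed.

(* The common offset set of the class has room for all of [T] in direction [j]. *)
Lemma contains_pattern_class S j hJ :
  contains_pattern (fun i => r (lift j i)) (drop_coord j @: thick_class S j hJ) ->
  contains_pattern r S.
Proof.
case: hJ => h J [g [g_class g_mono]].
have leTJ : #|T| <= #|J|.
  case: (pickP T) => [p0 _ | T0]; last by rewrite (eq_card0 T0).
  by have /imsetP [b /thick_classP [_ ? _ <-] _] := g_class p0; rewrite card_offsets.
have [e [eJ e_mono]] := ltn_embedding_in (@r_inj j) leTJ.
have lift_pt p : exists x, [&& x \in S, drop_coord j (contract x) == g p,
                              contract x j == h & (x j %% s == e p)].
  have /imsetP [b /thick_classP [_ _ bj_h offs_J] ->] := g_class p.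
  move: (eJ p); rewrite -offs_J => /imsetP [v /imsetP [x]].
  rewrite inE => /andP [Sx /eqP cx_b] -> ->.
  by exists x; rewrite Sx cx_b bj_h !eqxx.
have [f fP] := fin_all_exists lift_pt.
have fj p : f p j = h * s + e p :> nat.
  case/and4P: (fP p) => _ _ /eqP fj_h /eqP fj_e.
  by rewrite (divn_eq (f p j) s) -fj_e -contractE fj_h mulnC.
exists f; split=> [p|i]; first by case/and4P: (fP p).
apply: ltn_homo_mono => // p q.
have [i' -> lt_pq|-> lt_pq] := unliftP j i; last by rewrite !fj ltn_add2l -e_mono.
apply: (@ltn_contract s); case/and4P: (fP p) => _ /eqP gp _ _.
case/and4P: (fP q) => _ /eqP gq _ _.
by move: (g_mono i' p q); rewrite lt_pq -gp -gq !ffunE => <-.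
Qed.

Lemma card_thick_class k cd S j hJ N : km_bound d k cd -> #|T| = k ->
  ~ contains_pattern r S -> spread (contract @: S) N ->
  #|thick_class S j hJ| <= cd * N ^ d.
Proof.
move=> km cardT noP sprS.
have -> : #|thick_class S j hJ| = #|drop_coord j @: thick_class S j hJ|.
  apply/esym/card_in_imset => b b'; case: hJ => h J.
  move=> /thick_classP [_ _ bj _] /thick_classP [_ _ b'j _] eq_drop.
  apply/ffunP => i; have [i' ->|->] := unliftP j i; last by rewrite bj b'j.
  by have := congr1 (fun x : grid d.+1 M => x i') eq_drop; rewrite !ffunE.
apply: (km M T (fun i => r (lift j i)) _ N cardT).
- by move=> i; exact: @r_inj.
- move=> _ _ /imsetP [x xC ->] /imsetP [y yC ->] i; rewrite !ffunE.
  move: xC yC; case: hJ => h J.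
  by move=> /thick_classP [Sx _ _ _] /thick_classP [Sy _ _ _]; apply: sprS.
- by move=> cp; apply: noP; apply: contains_pattern_class cp.
Qed.

Lemma card_thick_fibers k cd S j N : km_bound d k cd -> #|T| = k ->
  ~ contains_pattern r S -> spread (contract @: S) N ->
  #|thick_fibers S j| <= N.*2 * 2 ^ s * (cd * N ^ d).
Proof.
move=> km cardT noP sprS.
set rows := [set (b : grid d.+2 M) j | b in contract @: S].
have card_rows : #|rows| <= N.*2.
  by apply: card_le_spread1 => _ _ /imsetP [x Sx ->] /imsetP [y Sy ->]; apply: sprS.
rewrite -sum1_card (partition_big (fun b : grid d.+2 M => (b j, offsets s_gt0 j S b))
   (mem (setX rows (powerset [set: 'I_s])))); last first.
  move=> b; rewrite !inE => /andP [cb _]; rewrite ?powersetE ?subsetT ?andbT.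
  by apply/imsetP; exists b.
apply: (@leq_trans (\sum_(hJ in setX rows (powerset [set: 'I_s])) (cd * N ^ d))).
  apply: leq_sum => hJ _; apply: leq_trans (card_thick_class j hJ km cardT noP sprS).
  by rewrite -sum1_card; apply: eq_leq; apply: eq_bigl => b; rewrite !inE andbA.
rewrite sum_nat_const cardsX card_powerset cardsT card_ord.
by rewrite leq_mul // leq_mul.
Qed.

(* A fiber is either thin in every direction, hence has at most [(k-1)^(d+2)]
   points, or thick in some direction [j] and lies in a box of side [s]. *)
Lemma card_le_thin_thick S : #|S| <=
  #|contract @: S| * #|T|.-1 ^ d.+2 + s ^ d.+2 * \sum_j #|thick_fibers S j|.
Proof.
rewrite (card_fibers s).
apply: (@leq_trans (\sum_(b in contract @: S) (#|T|.-1 ^ d.+2 + s ^ d.+2 *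
          \sum_j (#|T| <= #|proj j (fiber s S b)|)))).
  apply: leq_sum => b _.
  case: (boolP [exists j, #|T| <= #|proj j (fiber s S b)|]) => [/existsP [j thick]|].
    apply: leq_trans (card_fiber s_gt0 S b) (leq_trans _ (leq_addl _ _)).
    by apply: leq_pmulr; rewrite (bigD1 j) //= thick.
  rewrite negb_exists => /forallP thin; apply: leq_trans (leq_addr _ _).
  by apply: card_thin_fiber => j; have := thin j; rewrite -ltnNge.
rewrite big_split /= sum_nat_const mulnC leq_add2l -big_distrr /= leq_mul2l.
rewrite exchange_big /=; apply/orP; right; apply: eq_leq; apply: eq_bigr => j _.
rewrite -[RHS]sum1_card big_mkcond [RHS]big_mkcond; apply: eq_bigr => b _.
by rewrite !inE; case: (b \in _); case: (_ <= _).
Qed.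

End ThickFibers.

Definition block_size d k := 3 * (k ^ d.+2).+1.

Definition km_step_const d k c :=
  let s := block_size d k in s ^ d.+2 * d.+2 * 2 ^ s.+1 * c + 2 ^ d.+2 * s.

Fixpoint km_const d k := if d is d'.+1 then km_step_const d' k (km_const d' k) else k.

Section KMStep.
Variables (d k cd s c : nat).
Hypotheses (km : km_bound d k cd) (s_ge3 : 3 <= s).
Hypotheses (le_c_small : 2 ^ d.+2 * s <= c)
           (le_c_thick : s ^ d.+2 * d.+2 * 2 ^ s.+1 * cd <= c).
Hypothesis le_s : (k.-1 ^ d.+2).+1 * 3 ^ d.+1 <= s ^ d.+1.

Let s_gt0 : 0 < s := ltnW (ltnW s_ge3).

Lemma card_le_contract M (T : finType) (r : 'I_d.+2 -> T -> nat)
    (S : {set grid d.+2 M}) N :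
  #|T| = k -> (forall i, injective (r i)) -> spread S N -> ~ contains_pattern r S ->
  #|S| <= #|contract s @: S| * k.-1 ^ d.+2 + c * (N %/ s + 2) ^ d.+1.
Proof.
move=> cardT r_inj sprS noP; set N' := N %/ s + 2.
have per_dir j : #|thick_fibers s T S j| <= 2 ^ s.+1 * cd * N' ^ d.+1.
  have := card_thick_fibers s_gt0 r_inj j km cardT noP (spread_contract sprS).
  move/leq_trans; apply.
  by rewrite !expnS; move: (2 ^ s) (N' ^ d) => A B; lia.
have sum_thick : \sum_j #|thick_fibers s T S j| <= d.+2 * (2 ^ s.+1 * cd * N' ^ d.+1).
  apply: (@leq_trans (\sum_(j < d.+2) 2 ^ s.+1 * cd * N' ^ d.+1)).
    by apply: leq_sum => j _; apply: per_dir.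
  by rewrite sum_nat_const card_ord.
apply: leq_trans (card_le_thin_thick s_gt0 T S) _; rewrite cardT leq_add2l.
apply: leq_trans (leq_mul (leqnn _) sum_thick) _; move: le_c_thick.
move: (s ^ d.+2) (2 ^ s.+1) (N' ^ d.+1) => A B C le_c.
have -> : A * (d.+2 * (B * cd * C)) = A * d.+2 * B * cd * C by lia.
by rewrite leq_mul2r le_c orbT.
Qed.

Lemma km_bound_block : km_bound d.+1 k c.
Proof.
move=> M T r S N cardT r_inj; elim/ltn_ind: N S => N IHN S sprS noP.
have [le_Ns|lt_sN] := leqP N s.
  apply: leq_trans (card_le_spread sprS) _.
  rewrite -muln2 expnMn mulnC expnS mulnA leq_mul //.
  by apply: leq_trans le_c_small; rewrite leq_mul2l le_Ns orbT.
set N' := N %/ s + 2.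
have lt_N'N : N' < N.
  have : N %/ s <= N %/ 3 by apply: leq_div2l.
  rewrite /N'; have := leq_div N 3; lia.
have card_S' : #|contract s @: S| <= c * N' ^ d.+1.
  apply: IHN lt_N'N _ (spread_contract sprS) _.
  by move=> /(contains_pattern_contract r_inj).
have card_S : #|S| <= c * (k.-1 ^ d.+2).+1 * N' ^ d.+1.
  apply: leq_trans (card_le_contract cardT r_inj sprS noP) _.
  move: (leq_mul card_S' (leqnn (k.-1 ^ d.+2))).
  by move: (N' ^ d.+1) (k.-1 ^ d.+2) => A K; lia.
have le_N' : N' ^ d.+1 <= 3 ^ d.+1 * (N %/ s) ^ d.+1.
  rewrite -expnMn leq_exp2r //; have : 0 < N %/ s by rewrite divn_gt0 // ltnW.
  rewrite /N'; lia.
have le_sN : s ^ d.+1 * (N %/ s) ^ d.+1 <= N ^ d.+1.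
  by rewrite -expnMn leq_exp2r // mulnC leq_divM.
apply: leq_trans card_S _; rewrite -mulnA leq_mul2l; apply/orP; right.
apply: leq_trans (leq_mul (leqnn _) le_N') _; rewrite mulnA.
exact: leq_trans (leq_mul le_s (leqnn _)) le_sN.
Qed.

End KMStep.

Lemma km_bound_step d k cd : km_bound d k cd -> km_bound d.+1 k (km_step_const d k cd).
Proof.
move=> km; rewrite /km_step_const; set s := block_size d k.
apply: km_bound_block km _ (leq_addl _ _) (leq_addr _ _) _.
  by rewrite /s /block_size; lia.
have le_kk : k.-1 ^ d.+2 <= k ^ d.+2 by apply: leq_exp_base; lia.
have : (k ^ d.+2).+1 <= (k ^ d.+2).+1 ^ d.+1.
  by rewrite -{1}[(k ^ d.+2).+1]expn1; apply: leq_pexp2l.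
rewrite /s /block_size expnMn mulnC leq_mul2l => ?; apply/orP; right; lia.
Qed.

Lemma km_boundP d k : km_bound d k (km_const d k).
Proof. by elim: d => [|d IH]; [exact: km_bound0 | exact: km_bound_step]. Qed.

(** * Sizes of levels *)

(* The level [A_l] contains the points [z + y_i - y_(i-1)], where [z] is the
   most balanced point of [A_l] and [y] ranges over [[0, q)^(n-1)], extended by
   [y_(-1) = y_(n-1) = 0]; the sum telescopes back to [l]. *)
Section LevelCard.
Variables (n' k' l q : nat).
Local Notation n := n'.+1.
Local Notation k := k'.+1.
Hypotheses (q_gt0 : 0 < q) (q_le : q.-1 <= l %/ n).
Hypothesis q_le' : l %/ n + (0 < l %% n) + q <= k.
Implicit Types (y : {ffun 'I_n' -> 'I_q}) (i : 'I_n).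

Definition balanced_coord i : nat := l %/ n + (i < l %% n).

Definition pad y i : nat := if (insub (val i) : option 'I_n') is Some j then y j else 0.

Definition pad_prev y i : nat := if i == 0 :> nat then 0 else pad y (inord i.-1).

Lemma pad_le y i : pad y i <= q.-1.
Proof. by rewrite /pad; case: insub => [j|] //; have := ltn_ord (y j); lia. Qed.

Lemma pad_prev_le y i : pad_prev y i <= q.-1.
Proof. by rewrite /pad_prev; case: eqP => // _; apply: pad_le. Qed.

Lemma balanced_coord_bounds i : q.-1 <= balanced_coord i <= k - q.
Proof.
rewrite /balanced_coord; have : (i < l %% n) <= (0 < l %% n).
  by case: ltnP => //; lia.
lia.
Qed.

Definition telescope y : grid n k :=
  [ffun i => inord (balanced_coord i + pad y i - pad_prev y i)].

Lemma telescopeE y i : telescope y i = balanced_coord i + pad y i - pad_prev y i :> nat.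
Proof.
rewrite ffunE inordK //.
by have := balanced_coord_bounds i; have := pad_le y i; lia.
Qed.

Lemma telescope_inj : injective telescope.
Proof.
move=> y y' eq_yy'.
have eq_pad m i : i = m :> nat -> pad y i = pad y' i.
  elim: m i => [|m IH] i i_m; have := telescopeE y i; rewrite eq_yy' telescopeE.
    by rewrite /pad_prev i_m eqxx; have := balanced_coord_bounds i; lia.
  have -> : pad_prev y i = pad_prev y' i.
    rewrite /pad_prev i_m /=; apply: IH; rewrite inordK //; have := ltn_ord i; lia.
  by have := pad_prev_le y' i; have := balanced_coord_bounds i; lia.
apply/ffunP => j; apply: val_inj.
have := eq_pad _ (lift ord_max j) erefl; rewrite /pad.
suff -> : (insub (val (lift ord_max j)) : option 'I_n') = Some j by [].
by rewrite /= /bump leqNgt ltn_ord add0n valK.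
Qed.

Lemma sum_balanced_coord : \sum_i balanced_coord i = l.
Proof.
rewrite big_split /= sum_nat_const card_ord sum_ord_ltn.
by rewrite (minn_idPl (ltnW (ltn_pmod l (ltn0Sn n')))) mulnC -divn_eq.
Qed.

Lemma sum_pad y : \sum_i pad y i = \sum_(j < n') (y j : nat).
Proof.
rewrite big_ord_recr /= {2}/pad insubF ?ltnn // addn0.
apply: eq_bigr => j _; rewrite /pad.
suff -> : (insub (val (widen_ord (leqnn _) j)) : option 'I_n') = Some j by [].
by rewrite /= valK.
Qed.

Lemma sum_pad_prev y : \sum_i pad_prev y i = \sum_(j < n') (y j : nat).
Proof.
rewrite big_ord_recl /= {1}/pad_prev /= add0n.
apply: eq_bigr => j _; rewrite /pad_prev /= /pad.
suff -> : (insub (val (inord (bump 0 j).-1 : 'I_n)) : option 'I_n') = Some j by [].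
by rewrite /= inordK /bump ?add1n /= ?valK //; have := ltn_ord j; lia.
Qed.

Lemma level_telescope y : level (telescope y) = l.
Proof.
have : \sum_(i < n) (telescope y i : nat) + \sum_(i < n) pad_prev y i =
       \sum_(i < n) balanced_coord i + \sum_(i < n) pad y i.
  rewrite -!big_split /=; apply: eq_bigr => i _; rewrite telescopeE.
  by have := pad_prev_le y i; have := balanced_coord_bounds i; lia.
by rewrite sum_balanced_coord sum_pad sum_pad_prev /level; lia.
Qed.

Lemma card_level_ge : q ^ n' <= #|level_set n k l|.
Proof.
rewrite -[q]card_ord -[n' in _ ^ n']card_ord -card_ffun.
rewrite -(card_imset _ telescope_inj); apply: subset_leq_card.
by apply/subsetP => _ /imsetP [y _ ->]; rewrite inE level_telescope.
Qed.

End LevelCard.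

Definition level_width n k l := minn (minn l.+1 (k * n - n - l).+1) k.

Lemma card_level_width n' k' l : l <= k'.+1 * n'.+1 - n'.+1 ->
  maxn 1 (level_width n'.+1 k'.+1 l %/ n'.+1) ^ n' <= #|level_set n'.+1 k'.+1 l|.
Proof.
move=> le_l; set n := n'.+1; set k := k'.+1; set g := level_width n k l.
have l_eq := divn_eq l n; have lt_mod := ltn_pmod l (ltn0Sn n').
set X := l %/ n in l_eq *; set R := l %% n in l_eq lt_mod *.
have le_gq := leq_divM g n; set q := g %/ n in le_gq *.
have g_le1 : g <= l.+1 by rewrite /g /level_width; lia.
have g_le2 : g <= (k * n - n - l).+1 by rewrite /g /level_width; lia.
have g_le3 : g <= k by rewrite /g /level_width; lia.
have le_nkn : n <= k * n by rewrite leq_pmull.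
move: le_l; rewrite -/n -/k => le_l.
apply: card_level_ge; rewrite -/X -/R -/n -/k; clearbody X R q g.
- by rewrite leq_max.
- have [q0|q_gt0] := leqP q 0; first by rewrite (maxn_idPl _) //; lia.
  rewrite (maxn_idPr _) //.
  have : q * n <= X.+1 * n by rewrite mulSn; lia.
  by rewrite leq_pmul2r //; lia.
- have [q0|q_gt0] := leqP q 0.
    rewrite (maxn_idPl _); last by lia.
    have [R0|R_gt0] := posnP R.
      have : X.+1 * n <= k * n by rewrite mulSn; lia.
      by rewrite leq_pmul2r //; lia.
    have : X.+1 * n < k * n by rewrite mulSn; lia.
    by rewrite ltn_pmul2r //; lia.
  rewrite (maxn_idPr _) //.
  have [R0|R_gt0] := posnP R.
    have : (X + q) * n <= k * n by rewrite mulnDl; lia.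
    by rewrite leq_pmul2r //; lia.
  have : (X + q).+1 * n <= k * n by rewrite mulSn mulnDl; lia.
  by rewrite leq_pmul2r //; lia.
Qed.

Lemma leq_coord_level n k (x : grid n k) i : x i <= level x.
Proof. by rewrite /level (bigD1 i) //= leq_addr. Qed.

Lemma top_levelE n k : k * n - n = \sum_(j < n) k.-1.
Proof. by rewrite sum_nat_const card_ord; case: k => [|k] /=; lia. Qed.

Lemma level_max n k (x : grid n k) : level x <= k * n - n.
Proof.
by rewrite /level top_levelE; apply: leq_sum => j _; have := ltn_ord (x j); lia.
Qed.

Lemma leq_cocoord_colevel n k (x : grid n k) i : k.-1 - x i <= k * n - n - level x.
Proof.
have colevel : \sum_(j < n) (k.-1 - x j) + level x = k * n - n.
  rewrite /level -big_split top_levelE /=.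
  by apply: eq_bigr => j _; have := ltn_ord (x j); lia.
have : k.-1 - x i <= \sum_(j < n) (k.-1 - x j) by rewrite (bigD1 i) //= leq_addr.
lia.
Qed.

Section Shells.
Variables (n' k c : nat) (S : {set grid n'.+1 k}).
Local Notation n := n'.+1.
Hypothesis card_spread_sub : forall (S' : {set grid n k}) N,
  S' \subset S -> spread S' N -> #|S'| <= c * N ^ n'.

(* Points of narrow levels are close to the bottom or to the top corner,
   hence form two sets of small spread. *)
Lemma card_narrow_levels G :
  #|[set x in S | level_width n k (level x) < G]| <= 2 * c * G ^ n'.
Proof.
have [le_Gk|lt_kG] := leqP G k; last first.
  apply: (@leq_trans #|S|).
    by apply: subset_leq_card; apply/subsetP => x; rewrite inE => /andP [].
  apply: leq_trans (card_spread_sub (subxx S) _) _ => [x y _ _ i|].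
    exact: leq_trans (ltn_ord _) (leq_addl _ _).
  apply: (@leq_trans (c * G ^ n')); last by rewrite -mulnA leq_pmull.
  by rewrite leq_mul2l (leq_exp_base _ (ltnW lt_kG)) orbT.
set X1 := [set x in S | level x < G].
set X2 := [set x in S | k * n - n - level x < G].
have card_X1 : #|X1| <= c * G ^ n'.
  apply: card_spread_sub; first by apply/subsetP => x; rewrite inE => /andP [].
  move=> x y; rewrite !inE => /andP [_ lt_x] _ i.
  by apply: leq_ltn_trans (leq_coord_level x i) _; apply: leq_trans lt_x (leq_addl _ _).
have card_X2 : #|X2| <= c * G ^ n'.
  apply: card_spread_sub; first by apply/subsetP => x; rewrite inE => /andP [].
  move=> x y; rewrite !inE => _ /andP [_ lt_y] i.
  by have := leq_cocoord_colevel y i; have := ltn_ord (x i); lia.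
apply: leq_trans (_ : #|X1 :|: X2| <= _).
  apply: subset_leq_card; apply/subsetP => x; rewrite !inE => /andP [Sx lt_g].
  by rewrite Sx /=; move: lt_g; rewrite /level_width; lia.
by apply: leq_trans (leq_card_setU _ _) _; lia.
Qed.

Definition width_log l := trunc_log 2 (level_width n k l).

Lemma card_shell t :
  #|[set x in S | width_log (level x) == t]| <= 2 * c * (2 ^ t.+1) ^ n'.
Proof.
apply: leq_trans (card_narrow_levels _); apply: subset_leq_card; apply/subsetP => x.
by rewrite !inE => /andP [-> /eqP <-]; apply: trunc_log_ltn.
Qed.

End Shells.

Definition shell_size n' t := maxn 1 (2 ^ t %/ n'.+1) ^ n'.

Lemma shell_size_gt0 n' t : 0 < shell_size n' t.
Proof. by rewrite /shell_size expn_gt0 leq_max. Qed.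

Lemma shell_size_le n' k' l : l <= k'.+1 * n'.+1 - n'.+1 ->
  shell_size n' (width_log n' k'.+1 l) <= #|level_set n'.+1 k'.+1 l|.
Proof.
move=> le_l; apply: leq_trans (card_level_width le_l); apply: leq_exp_base.
rewrite geq_max leq_maxl /=; apply: leq_trans (leq_maxr 1 _); apply: leq_div2r.
by apply: trunc_logP => //; rewrite /level_width; lia.
Qed.

Lemma card_shell_le n' c t :
  2 * c * (2 ^ t.+1) ^ n' <= 2 * c * (4 * n'.+1) ^ n' * shell_size n' t.
Proof.
rewrite /shell_size -[X in _ <= X]mulnA -expnMn leq_mul2l; apply/orP; right.
apply: leq_exp_base; have := ltn_ceil (2 ^ t) (ltn0Sn n').
set q := 2 ^ t %/ n'.+1; clearbody q => lt_q.
have le_q : q.+1 <= 2 * maxn 1 q by rewrite /maxn; case: (ltnP 1 q) => ?; lia.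
have : q.+1 * n'.+1 * 2 <= 2 * maxn 1 q * n'.+1 * 2 by rewrite !leq_mul2r le_q !orbT.
rewrite expnS; lia.
Qed.

(** * The Lubell mass *)

(* Importing ssralg rebinds the delimiter %R to ring_scope, which would change
   the reading of the statement of [mainTheorem6]; so its import is confined
   to a module. *)
Module LubellSum.
From mathcomp Require Import order ssralg ssrnum Rstruct.
Import Order.TTheory GRing.Theory Num.Theory.
Local Open Scope ring_scope.

Lemma lubellE n k (S : {set grid n k}) :
  lubell S = \sum_(x in S) (#|level_set n k (level x)|%:R)^-1.
Proof.
set N := (k * n - n)%N.
have level_lt (x : grid n k) : (level x < N.+1)%N by rewrite ltnS level_max.
rewrite /lubell sum_f_R0E; under eq_bigr => i _ do rewrite RdivE !INRE.
rewrite big_mkord (partition_big (fun x => (inord (level x) : 'I_N.+1)) xpredT) //=.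
apply: eq_bigr => i _.
rewrite (eq_bigr (fun _ => (#|level_set n k i|%:R)^-1)); last first.
  by move=> x /andP [_ /eqP <-]; rewrite inordK.
rewrite (eq_bigl (mem (S :&: level_set n k i))) ?sumr_const ?mulr_natl // => x.
by rewrite !inE -(inj_eq val_inj) /= inordK.
Qed.

Lemma lubell_le_shells n' k' c (S : {set grid n'.+1 k'.+1}) :
  (forall (S' : {set grid n'.+1 k'.+1}) N, S' \subset S -> spread S' N ->
     (#|S'| <= c * N ^ n')%N) ->
  Rle (lubell S) (INR ((trunc_log 2 k'.+1).+1 * (2 * c * (4 * n'.+1) ^ n'))).
Proof.
move=> card_spread_sub; rewrite INRE; apply/RleP; set n := n'.+1; set k := k'.+1.
set L := trunc_log 2 k; set K := (2 * c * (4 * n) ^ n')%N.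
have shell_gt0 t : 0 < (shell_size n' t)%:R :> R by rewrite ltr0n shell_size_gt0.
rewrite lubellE.
apply: (@le_trans _ _
  (\sum_(x in S) ((shell_size n' (width_log n' k (level x)))%:R)^-1)).
  apply: ler_sum => x _; have le_shell := shell_size_le (level_max x).
  rewrite lef_pV2 ?posrE ?shell_gt0 ?ler_nat //.
  by rewrite ltr0n (leq_trans (shell_size_gt0 _ _) le_shell).
have width_log_lt x : (width_log n' k (level x) < L.+1)%N.
  by rewrite ltnS; apply: leq_trunc_log; rewrite /level_width; lia.
rewrite (partition_big (fun x => (inord (width_log n' k (level x)) : 'I_L.+1))
  xpredT) //=.
apply: (@le_trans _ _ (\sum_(t < L.+1) K%:R)); last first.
  by rewrite sumr_const card_ord natrM mulr_natl.
apply: ler_sum => t _.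
rewrite (eq_bigr (fun _ => ((shell_size n' t)%:R)^-1)); last first.
  by move=> x /andP [_ /eqP <-]; rewrite inordK.
rewrite (eq_bigl (mem [set x in S | width_log n' k (level x) == t])); last first.
  by move=> x; rewrite !inE -(inj_eq val_inj) /= inordK.
rewrite sumr_const -[X in X <= _]mulr_natl ler_pdivrMr // -natrM ler_nat.
exact: leq_trans (card_shell card_spread_sub t) (card_shell_le _ _ _).
Qed.

End LubellSum.

Lemma realizer_pattern (T : finType) (le : rel T) d n' :
  has_realizer le d.+1 -> d <= n' ->
  exists r : 'I_n'.+1 -> T -> nat, (forall i, injective (r i)) /\
    forall k (S : {set grid n'.+1 k}), contains_pattern r S -> contains_copy le S.
Proof.
move=> [L [L_bij L_real]] le_dn.
pose r (i : 'I_n'.+1) p := (L (inord (minn i d)) p : nat).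
have r_inj i : injective (r i).
  by move=> p q eq_r; apply: (bij_inj (L_bij (inord (minn i d)))); apply: val_inj.
exists r; split=> // k S [f [fS f_mono]]; exists f; split; last split => //.
  move=> p q fpq; apply: (r_inj ord0).
  have := f_mono ord0 p q; have := f_mono ord0 q p; rewrite fpq ltnn.
  by case: (ltngtP (r ord0 p) (r ord0 q)) => // _ ->.
move=> p q; apply/idP/idP.
  move/L_real => le_L; apply/forallP => j.
  by rewrite leqNgt -f_mono -leqNgt; apply: le_L.
move/forallP => le_f; apply/L_real => i.
have lt_in : i < n'.+1 by have := ltn_ord i; lia.
have := le_f (Ordinal lt_in); rewrite leqNgt -f_mono -leqNgt /r /=.
suff -> : inord (minn i d) = i by [].
by apply: val_inj; rewrite /= inordK; have := ltn_ord i; lia.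
Qed.

Definition lubell_const m n := 8 * km_const n.-1 m * (4 * n) ^ n.-1.

Lemma lubell_le_const (T : finType) (le : rel T) d n k (S : {set grid n k}) :
  has_realizer le d.+1 -> d < n -> 2 <= k -> ~ contains_copy le S ->
  (lubell S <= INR (lubell_const #|T| n) * ln (INR k))%R.
Proof.
case: n S => // n' S; case: k S => // k' S realizer le_dn le2k noS.
have [r [r_inj r_copy]] := realizer_pattern realizer le_dn.
set c := km_const n' #|T|.
have card_spread_sub (S' : {set grid n'.+1 k'.+1}) N : S' \subset S -> spread S' N ->
    #|S'| <= c * N ^ n'.
  move=> sub_S' spr_S'.
  apply: (km_boundP erefl r_inj spr_S') => /r_copy [f [f_inj [fS' f_le]]].
  by apply: noS; exists f; split=> //; split=> // p; apply: (subsetP sub_S').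
apply: Rle_trans (LubellSum.lubell_le_shells card_spread_sub) _.
have -> : lubell_const #|T| n'.+1 = 4 * (2 * c * (4 * n'.+1) ^ n').
  by rewrite /lubell_const /c /=; lia.
move: (2 * c * _) => K; rewrite !mult_INR (_ : INR 4 = 4%R); last by rewrite /=; lra.
have := ln_INR_ge0 (ltn0Sn k'); have := trunc_log2_le_ln le2k; have := pos_INR K; nra.
Qed.

Theorem mainTheorem6 :
  exists alpha : nat -> R,
  forall (T : finType) (le : rel T), is_partial_order le ->
  exists C : R,
  forall (dP n k : nat), is_dim le dP -> (dP <= n)%N -> (2 <= k)%N ->
  forall S : {set grid n k}, ~ contains_copy le S ->
  (lubell S <= C * alpha n * ln (INR k))%R.
Proof.
exists (fun n => INR (\sum_(m < n.+1) lubell_const m n).+1) => T le _.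
exists (INR (\sum_(i < #|T|.+1) lubell_const #|T| i).+1).
move=> [|d] n k [// _ [realizer _]] le_dn le2k S noS.
apply: Rle_trans (lubell_le_const realizer le_dn le2k noS) _.
apply: Rmult_le_compat_r; first by apply: ln_INR_ge0; lia.
by cbv beta; rewrite -mult_INR; apply/le_INR/leP/leq_mul_sums.
Qed.
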